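(* Let $d\ge 2$ and $m\ge 1$. Let $h_0,\ldots,h_{m-1}$ be $m$ distinct hyperplanes in $\mathbb{R}^d$ that all contain a common $(d-2)$-flat $\ell$, dividing $\mathbb{R}^d$ into $2m$ parts (the connected components of the complement of their union). Let $P=\{p_0,\ldots,p_{2m-1}\}$ consist of $2m$ points, one from each part. Then at least $\frac{(m+1)m(m-1)}{3}$ of the triangles with vertices in $P$ intersect $\ell$.
   Context: A $(d-2)$-flat is a $(d-2)$-dimensional affine subspace of $\mathbb{R}^d$. A triangle with vertices in $P$ is the closed convex hull of a $3$-element subset of $P$. *)

From HB Require Import structures.
From mathcomp Require Import all_boot all_order all_algebra.
From mathcomp Require Import all_classical all_reals all_analysis.
Set Implicit Arguments. Unset Strict Implicit. Unset Printing Implicit Defensive.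
Import Order.TTheory GRing.Theory Num.Theory.
Import numFieldNormedType.Exports.
Local Open Scope ring_scope.
Local Open Scope classical_set_scope.

(* The hyperplane {x | <a, x> = b}  (meaningful when a != 0). *)
Definition hyperplane (R : realType) (d : nat) (a : 'rV[R]_d) (b : R)
  : set 'rV[R]_d := [set x | (x *m a^T) 0 0 = b].

Definition is_flat (R : realType) (d k : nat) (L : set 'rV[R]_d) : Prop :=
  exists (c : 'rV[R]_d) (B : 'M[R]_(k, d)),
    row_free B /\ L = [set x | exists u : 'rV[R]_k, x = c + u *m B].

Definition conv_hull (R : realType) (d n : nat) (p : 'I_n -> 'rV[R]_d)
  (S : {set 'I_n}) : set 'rV[R]_d :=
  [set x | exists w : 'I_n -> R,
     [/\ forall i, 0 <= w i,
         forall i, i \notin S -> w i = 0,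
         \sum_i w i = 1 &
         x = \sum_i w i *: p i]].

(* Number of triangles (3-element subsets of the point set, given by
   indices of the injective family p) that intersect L. *)
Definition num_triangles_meeting (R : realType) (d n : nat)
  (p : 'I_n -> 'rV[R]_d) (L : set 'rV[R]_d) : nat :=
  #|[set S : {set 'I_n} | (#|S| == 3)%N &&
       `[< exists x, L x /\ conv_hull p S x >] ]|.

Definition same_component (R : realType) (d : nat) (U : set 'rV[R]_d)
  (x y : 'rV[R]_d) : Prop :=
  @connected_component 'rV[R]_d U x y.

From HB Require Import structures.
From mathcomp Require Import all_boot all_order all_algebra.
From mathcomp Require Import all_classical all_reals all_analysis.
From mathcomp Require Import ring lra zify.
Import Order.TTheory GRing.Theory Num.Theory numFieldNormedType.Exports.

(* All hyperplanes contain the (d-2)-flat l, so projecting along l onto a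
   plane turns them into m lines through the origin, and the 2m points into
   points of the 2m sectors, one in each.  A triangle meets l as soon as its
   projection surrounds the origin.  Otherwise the triangle has an apex x seeing
   its two other vertices counterclockwise, within the open half-plane to the
   left of x.  Two points of that half-plane are separated from x by different
   numbers of lines (the separating sets form a chain), so the half-plane holds
   at most m - 1 points, plus one if some point is separated from x by all m
   lines; the latter happens for at most m of the points.  Hence at most
   2m C(m-1, 2) + m (m-1) of the C(2m, 3) triangles miss l, which leaves
   (m+1) m (m-1) / 3 triangles meeting l. *)

Set Implicit Arguments.
Unset Strict Implicit.
Unset Printing Implicit Defensive.

Local Open Scope ring_scope.

Lemma convex_comb_neq0 (R : realFieldType) (A B t : R) :
  0 < A * B -> 0 <= t <= 1 -> (1 - t) * A + t * B != 0.
Proof.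
move=> AB /andP[t0 t1]; have AA : 0 < A * A.
  by rewrite -expr2 exprn_even_gt0 //=; apply: contraTneq AB => ->; rewrite mul0r ltxx.
suff : 0 < A * ((1 - t) * A + t * B) by apply: contraTneq => ->; rewrite mulr0 ltxx.
have [->|t_gt0] := eqVneq t 0; first by rewrite subr0 mul1r mul0r addr0.
have t_pos : 0 < t by rewrite lt_neqAle eq_sym t_gt0.
nra.
Qed.

Lemma mulr_gt0_same_sign (R : realDomainType) (x y : R) :
  x != 0 -> y != 0 -> (0 < x) = (0 < y) -> 0 < x * y.
Proof.
move=> x_neq0 y_neq0; case: (ltgtP 0 x) x_neq0 => // [x_gt0|x_lt0] _ sxy.
  by rewrite mulr_gt0 // -sxy.
by rewrite nmulr_rgt0 // ltNge le0r (negbTE y_neq0) -sxy.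
Qed.

Lemma pencil_count_arith m g e : (0 < m)%N ->
  ('C(2 * m, 3) <= g + 2 * m * 'C(m.-1, 2) + e * m.-1)%N -> (e <= m)%N ->
  ((m + 1) * m * (m - 1) <= 3 * g)%N.
Proof.
case: m => [|[|j]] //= _ le_C3 le_e.
have C3 := bin_ffact (2 * j.+2) 3; have C2 := bin_ffact j.+1 2.
rewrite !ffactnS ffactn0 muln1 (_ : 3`! = 6) // in C3.
rewrite !ffactnS ffactn0 muln1 (_ : 2`! = 2) // in C2.
have ej : (e * j.+1 <= j.+2 * j.+1)%N by rewrite leq_mul2r le_e orbT.
have C2' : (2 * j.+2 * 'C(j.+1, 2) * 2 = 2 * j.+2 * (j.+1 * j))%N.
  by rewrite -mulnA C2.
lia.
Qed.

Lemma sum_mul_delta (R : pzSemiRingType) (n : nat) (F : 'I_n -> R) (k : 'I_n) :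
  \sum_j F j * (j == k)%:R = F k.
Proof.
by rewrite (bigD1 k) //= eqxx mulr1 big1 ?addr0 // => j /negbTE->; rewrite mulr0.
Qed.

Section PlanarPencil.
Context {R : realFieldType} {n m : nat} (u v : 'I_n -> R) (al be : 'I_m -> R).

(* Point k of the plane is (u k, v k); line i through the origin is the kernel
   of the linear form lform i. *)

Definition cross (k l : 'I_n) := u k * v l - v k * u l.
Definition dotp (k l : 'I_n) := u k * u l + v k * v l.
Definition lform (i : 'I_m) (k : 'I_n) := al i * u k + be i * v k.

Definition origin_in_hull (S : {set 'I_n}) := exists w : 'I_n -> R,
  [/\ forall j, 0 <= w j, forall j, j \notin S -> w j = 0, \sum_j w j = 1,
      \sum_j w j * u j = 0 & \sum_j w j * v j = 0].

Definition ccw_apex (S : {set 'I_n}) :=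
  exists2 x, x \in S & forall y, y \in S -> y != x -> 0 < cross x y.

Lemma crossC k l : cross k l = - cross l k.
Proof. by rewrite /cross; ring. Qed.

Lemma crossxx k : cross k k = 0.
Proof. by rewrite /cross mulrC subrr. Qed.

Lemma origin_in_hull_scale (S : {set 'I_n}) (w : 'I_n -> R) :
  (forall j, 0 <= w j) -> (forall j, j \notin S -> w j = 0) -> 0 < \sum_j w j ->
  \sum_j w j * u j = 0 -> \sum_j w j * v j = 0 -> origin_in_hull S.
Proof.
move=> w_ge0 wS w_gt0 wu wv; set s := \sum_j w j.
have sumE F : \sum_j (w j / s) * F j = (\sum_j w j * F j) / s.
  by rewrite mulr_suml; apply: eq_bigr => j _; rewrite mulrAC.
exists (fun j => w j / s); split=> [j|j jS|||].
- by rewrite divr_ge0 // ltW.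
- by rewrite wS // mul0r.
- by rewrite -mulr_suml divff // gt_eqF.
- by rewrite sumE wu mul0r.
- by rewrite sumE wv mul0r.
Qed.

Lemma origin_in_hull3 (S : {set 'I_n}) k1 k2 k3 w1 w2 w3 :
  k1 \in S -> k2 \in S -> k3 \in S -> 0 <= w1 -> 0 <= w2 -> 0 <= w3 ->
  0 < w1 + w2 + w3 -> w1 * u k1 + w2 * u k2 + w3 * u k3 = 0 ->
  w1 * v k1 + w2 * v k2 + w3 * v k3 = 0 -> origin_in_hull S.
Proof.
move=> k1S k2S k3S w1_ge0 w2_ge0 w3_ge0 w_gt0 wu wv.
pose w j := w1 * (j == k1)%:R + w2 * (j == k2)%:R + w3 * (j == k3)%:R.
have sumE F : \sum_j w j * F j = w1 * F k1 + w2 * F k2 + w3 * F k3.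
  transitivity (\sum_j (w1 * (F j * (j == k1)%:R) + w2 * (F j * (j == k2)%:R)
                        + w3 * (F j * (j == k3)%:R))).
    by apply: eq_bigr => j _; rewrite /w; ring.
  by rewrite !big_split -!mulr_sumr /= !sum_mul_delta.
apply: (@origin_in_hull_scale S w) => [j||||].
- by rewrite !addr_ge0 // mulr_ge0 // ler0n.
- move=> j jS; rewrite /w.
  have jk k : k \in S -> (j == k) = false by move=> kS; apply: contraNF jS => /eqP->.
  by rewrite !jk // !mulr0 !addr0.
- by have := sumE (fun=> 1); rewrite (eq_bigr w) => [->|j _]; rewrite ?mulr1.
- by rewrite sumE.
- by rewrite sumE.
Qed.

Hypothesis lform_neq0 : forall i k, lform i k != 0.
Hypothesis lform_sign_inj :
  forall k l, (forall i, (0 < lform i k) = (0 < lform i l)) -> k = l.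
Hypothesis m_gt0 : (0 < m)%N.

Lemma dotpp_gt0 k : 0 < dotp k k.
Proof.
have := lform_neq0 (Ordinal m_gt0) k; rewrite /lform /dotp => nz.
have [u0|u0] := eqVneq (u k) 0; last by nra.
have [v0|v0] := eqVneq (v k) 0; last by nra.
by move: nz; rewrite u0 v0 !mulr0 addr0 eqxx.
Qed.

Lemma cross0_lform k l i :
  cross k l = 0 -> dotp k k * lform i l = dotp k l * lform i k.
Proof.
move=> kl0; apply/eqP; rewrite -subr_eq0.
have -> : dotp k k * lform i l - dotp k l * lform i k
          = (be i * u k - al i * v k) * cross k l.
  by rewrite /dotp /lform /cross; ring.
by rewrite kl0 mulr0.
Qed.

(* Two points on a common ray through the origin lie in the same sector. *)
Lemma cross0_dotp_gt0 k l : cross k l = 0 -> 0 < dotp k l -> k = l.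
Proof.
move=> kl0 kl_gt0; apply: lform_sign_inj => i.
have E := cross0_lform i kl0; have kk_gt0 := dotpp_gt0 k.
apply/idP/idP => lf_gt0.
  by rewrite -(pmulr_rgt0 _ kk_gt0) E mulr_gt0.
by rewrite -(pmulr_rgt0 _ kl_gt0) -E mulr_gt0.
Qed.

Lemma origin_in_hull_cross0 (S : {set 'I_n}) k l :
  k \in S -> l \in S -> k != l -> cross k l = 0 -> origin_in_hull S.
Proof.
move=> kS lS kl kl0.
have kl_le0 : dotp k l <= 0.
  by rewrite leNgt; apply: contra_neqN kl => /(cross0_dotp_gt0 kl0)->.
have ll_gt0 := dotpp_gt0 l.
apply: (@origin_in_hull3 S k l k (dotp l l) (- dotp k l) 0) => //.
- exact: ltW.
- by rewrite oppr_ge0.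
- by rewrite addr0 subr_gt0 (le_lt_trans kl_le0).
- transitivity (v l * cross k l); last by rewrite kl0 mulr0.
  by rewrite /cross /dotp; ring.
- transitivity (- u l * cross k l); last by rewrite kl0 mulr0.
  by rewrite /cross /dotp; ring.
Qed.

Lemma card3_set3 (T : finType) (S : {set T}) : #|S| = 3%N ->
  exists x y z, [/\ x != y, y != z, z != x & S = [set x; y; z]].
Proof.
move=> S3; have /card_gt0P[x xS] : (0 < #|S|)%N by rewrite S3.
have /cards2P[y [z [yz Exyz]]] : #|S :\ x| == 2%N.
  by move: S3; rewrite (cardsD1 x) xS add1n => -[->].
have : [set y; z] \subset S :\ x by rewrite Exyz.
rewrite finset.subUset !finset.sub1set !inE => /andP[/andP[yx _] /andP[zx _]].
exists x, y, z; split => //; first by rewrite eq_sym.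
rewrite -(finset.setD1K xS) Exyz.
by apply/finset.setP => t; rewrite !inE orbA.
Qed.

Lemma origin_in_hull_or_ccw_apex (S : {set 'I_n}) :
  #|S| = 3%N -> origin_in_hull S \/ ccw_apex S.
Proof.
case/card3_set3=> x [y [z [xy yz zx ->]]].
have xS : x \in [set x; y; z] by rewrite !inE eqxx.
have yS : y \in [set x; y; z] by rewrite !inE eqxx orbT.
have zS : z \in [set x; y; z] by rewrite !inE eqxx !orbT.
have [yz0|yz0] := eqVneq (cross y z) 0; first by left; apply: origin_in_hull_cross0 yz0.
have [zx0|zx0] := eqVneq (cross z x) 0; first by left; apply: origin_in_hull_cross0 zx0.
have [xy0|xy0] := eqVneq (cross x y) 0; first by left; apply: origin_in_hull_cross0 xy0.
have apex t t1 t2 : [set x; y; z] = [set t; t1; t2] ->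
    0 < cross t t1 -> 0 < cross t t2 -> ccw_apex [set x; y; z].
  move=> E t1_gt0 t2_gt0; rewrite E; exists t; first by rewrite !inE eqxx.
  by move=> s; rewrite !inE -orbA => /or3P[/eqP->|/eqP->|/eqP->]; rewrite ?eqxx.
have Exyz : [set x; y; z] = [set y; z; x].
  by apply/finset.setP => t; rewrite !inE; do 3!case: (t == _).
have Ezxy : [set x; y; z] = [set z; x; y].
  by apply/finset.setP => t; rewrite !inE; do 3!case: (t == _).
have Iu : cross y z * u x + cross z x * u y + cross x y * u z = 0 by rewrite /cross; ring.
have Iv : cross y z * v x + cross z x * v y + cross x y * v z = 0 by rewrite /cross; ring.
case: (ltgtP (cross y z) 0) yz0 => // yz_s _; case: (ltgtP (cross z x) 0) zx0 => // zx_s _;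
  case: (ltgtP (cross x y) 0) xy0 => // xy_s _.
- left; apply: (@origin_in_hull3 _ x y z (- cross y z) (- cross z x) (- cross x y)) => //;
    rewrite ?oppr_ge0 ?ltW //; first lra.
    by rewrite !mulNr -!opprD Iu oppr0.
  by rewrite !mulNr -!opprD Iv oppr0.
- by right; apply: (apex x y z) => //; rewrite crossC oppr_gt0.
- by right; apply: (apex z x y Ezxy) => //; rewrite crossC oppr_gt0.
- by right; apply: (apex z x y Ezxy) => //; rewrite crossC oppr_gt0.
- by right; apply: (apex y z x Exyz) => //; rewrite crossC oppr_gt0.
- by right; apply: (apex x y z) => //; rewrite crossC oppr_gt0.
- by right; apply: (apex y z x Exyz) => //; rewrite crossC oppr_gt0.
- left; apply: (@origin_in_hull3 _ x y z (cross y z) (cross z x) (cross x y)) => //;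
    rewrite ?ltW //; lra.
Qed.

Definition ccw_half x := [set y | 0 < cross x y].
Definition sep x y := [set i | (0 < lform i y) != (0 < lform i x)].

Lemma sepC x y : sep x y = sep y x.
Proof. by apply/finset.setP => i; rewrite !inE eq_sym. Qed.

Lemma in_sep i x y : (i \in sep x y) = (lform i x * lform i y < 0).
Proof.
have neg (g : R) : g != 0 -> (g < 0) = ~~ (0 < g) by move=> g0; rewrite ltNge le0r (negbTE g0).
rewrite inE mulr_lt0 !lform_neq0 !neg ?lform_neq0 //=.
by case: (0 < lform i x); case: (0 < lform i y).
Qed.

Lemma sep_inj x y z : sep x y = sep x z -> y = z.
Proof.
move=> E; apply: lform_sign_inj => i.
have : (i \in sep x y) = (i \in sep x z) by rewrite E.
by rewrite !inE; case: (0 < lform i x); case: (0 < lform i y); case: (0 < lform i z).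
Qed.

(* Rotating counterclockwise away from x, the lines separating x from the
   current point only accumulate. *)
Lemma sep_mono x y z : 0 < cross x y -> 0 < cross x z -> 0 < cross y z ->
  sep x y \subset sep x z.
Proof.
move=> xy xz yz; apply/fintype.subsetP => i; rewrite !in_sep => gxy.
have gxx : 0 < lform i x * lform i x by rewrite -expr2 exprn_even_gt0 //= lform_neq0.
have E : cross x y * (lform i x * lform i z)
         = cross x z * (lform i x * lform i y) - cross y z * (lform i x * lform i x).
  by rewrite /cross /lform; ring.
have : cross x y * (lform i x * lform i z) < 0.
  by rewrite E; nra.
by rewrite pmulr_rlt0.
Qed.

Lemma sep_neq0 x y : y \in ccw_half x -> sep x y != finset.set0.
Proof.
rewrite inE => xy; apply: contraTneq xy => sep0.
have /sep_inj-> : sep x y = sep x x.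
  by rewrite sep0; apply/esym/finset.setP => i; rewrite !inE eqxx.
by rewrite crossxx ltxx.
Qed.

Lemma ccw_half_cross_neq0 x y z :
  y \in ccw_half x -> z \in ccw_half x -> y != z -> cross y z != 0.
Proof.
rewrite !inE => xy xz; apply: contra_neqN => /eqP yz0.
have E : dotp y y * cross x z = dotp y z * cross x y.
  apply/eqP; rewrite -subr_eq0.
  have -> : dotp y y * cross x z - dotp y z * cross x y = dotp x y * cross y z.
    by rewrite /dotp /cross; ring.
  by rewrite yz0 mulr0.
apply: (cross0_dotp_gt0 yz0).
by rewrite -(pmulr_lgt0 _ xy) -E mulr_gt0 ?dotpp_gt0.
Qed.

Lemma sep_chain x y z : y \in ccw_half x -> z \in ccw_half x ->
  (sep x y \subset sep x z) || (sep x z \subset sep x y).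
Proof.
move=> yH zH; have [->|yz] := eqVneq y z; first by rewrite subxx.
have := ccw_half_cross_neq0 yH zH yz; move: yH zH; rewrite !inE => xy xz yz0.
case: (ltgtP (cross y z) 0) yz0 => // yz_s _.
  by rewrite orbC sep_mono // crossC oppr_gt0.
by rewrite sep_mono.
Qed.

Lemma card_sep_inj x y z : y \in ccw_half x -> z \in ccw_half x ->
  #|sep x y| = #|sep x z| -> y = z.
Proof.
move=> yH zH yz; apply: (@sep_inj x); case/orP: (sep_chain yH zH) => sub.
  by apply/eqP; rewrite -(subset_leqif_cards sub) yz.
by apply/esym/eqP; rewrite -(subset_leqif_cards sub) yz.
Qed.

Definition has_opposite x := [exists y, (y \in ccw_half x) && (sep x y == [set: 'I_m])].

(* The number of separating lines, minus one, is an injective code of the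
   points of the half-plane in 'I_m; the code m.-1 (all lines separate)
   requires an opposite point. *)
Lemma card_ccw_half x : (#|ccw_half x| <= m.-1 + has_opposite x)%N.
Proof.
have code_lt y : (#|sep x y|.-1 < m)%N.
  by have := max_card (mem (sep x y)); rewrite card_ord; case: #|_|.
pose code y : 'I_m := Ordinal (code_lt y).
have sep_gt0 y : y \in ccw_half x -> (0 < #|sep x y|)%N.
  by move=> yH; rewrite card_gt0 sep_neq0.
have code_inj : {in ccw_half x &, injective code}.
  move=> y z yH zH /(congr1 val) /= E; apply: (card_sep_inj yH zH).
  by rewrite -(prednK (sep_gt0 y yH)) E prednK ?sep_gt0.
rewrite -(card_in_imset code_inj); case opp: (has_opposite x).
  by rewrite addn1 prednK // (leq_trans (max_card _)) // card_ord.
have top_lt : (m.-1 < m)%N by rewrite ltn_predL.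
have : code @: ccw_half x \subset [set~ Ordinal top_lt].
  apply/fintype.subsetP => _ /imsetP[y yH ->]; rewrite !inE.
  apply: contraFN opp => /eqP/(congr1 val)/= E; apply/existsP; exists y.
  rewrite yH eqEcard finset.subsetT cardsT card_ord /=.
  by rewrite -(prednK (sep_gt0 y yH)) E prednK.
by move/subset_leq_card; rewrite cardsC1 card_ord addn0.
Qed.

Definition opposite x :=
  odflt x [pick y | (y \in ccw_half x) && (sep x y == [set: 'I_m])].

Lemma oppositeP x : has_opposite x ->
  opposite x \in ccw_half x /\ sep x (opposite x) = [set: 'I_m].
Proof.
rewrite /opposite => /existsP[y0 y0P]; case: pickP => [y /andP[yH /eqP sepT]|] //=.
by move/(_ y0); rewrite y0P.
Qed.

Lemma sepT_inj x x' y : sep x y = [set: 'I_m] -> sep x' y = [set: 'I_m] -> x = x'.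
Proof.
move=> sepT sepT'; apply: lform_sign_inj => i.
have : i \in sep x y by rewrite sepT inE.
have : i \in sep x' y by rewrite sepT' inE.
by rewrite !inE; case: (0 < lform i y); case: (0 < lform i x); case: (0 < lform i x').
Qed.

(* Opposition is injective and never relates two points that both have an
   opposite, so these points occupy at most half of the n sectors. *)
Lemma card_has_opposite : (2 * #|[set x | has_opposite x]| <= n)%N.
Proof.
set O := [set x | has_opposite x].
have opp_inj : {in O &, injective opposite}.
  move=> x1 x2; rewrite !inE => /oppositeP[_ sep1] /oppositeP[_ sep2] E.
  by apply: sepT_inj sep1 _; rewrite E.
have opp_dis : [disjoint O & opposite @: O].
  rewrite -setI_eq0; apply/eqP/finset.setP => y; rewrite !inE.
  apply/negP => /andP[yO /imsetP[x xO yE]]; move: xO yO; rewrite !inE.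
  move=> /oppositeP[xy sepxy] /oppositeP[yz sepyz]; rewrite -yE in xy sepxy yz sepyz.
  have zx : opposite y = x by apply: sepT_inj _ sepxy; rewrite sepC.
  by move: xy yz; rewrite zx !inE crossC oppr_gt0 => /lt_trans/[apply]; rewrite ltxx.
have := max_card (mem (O :|: opposite @: O)).
rewrite cardsU (disjoint_setI0 opp_dis) cards0 subn0 (card_in_imset opp_inj).
by rewrite card_ord addnn -mul2n.
Qed.

(* A triangle not surrounding the origin has a counterclockwise apex x, and is
   then x together with two points of the half-plane ccw_half x. *)
Lemma card_triangles_le_hull_apex :
  ('C(n, 3) <= #|[set S : {set 'I_n} | (#|S| == 3) && `[< origin_in_hull S >]]|
               + \sum_x 'C(#|ccw_half x|, 2))%N.
Proof.
set G := [set S : {set 'I_n} | _].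
pose apexed x := [set x |: B | B in [set B : {set 'I_n} | B \subset ccw_half x & #|B| == 2]].
have sub : [set S : {set 'I_n} | #|S| == 3%N] \subset G :|: \bigcup_x apexed x.
  apply/fintype.subsetP => S; rewrite !inE => /eqP S3.
  case: (origin_in_hull_or_ccw_apex S3) => [S0|[x xS apex]].
    by rewrite S3 eqxx; apply/orP; left; apply/asboolP.
  apply/orP; right; apply/bigcupP; exists x => //; apply/imsetP.
  exists (S :\ x); last by rewrite finset.setD1K.
  rewrite inE; apply/andP; split.
    by apply/fintype.subsetP => y; rewrite !inE => /andP[yx yS]; apply: apex.
  by move: S3; rewrite (cardsD1 x) xS add1n => -[->].
have := subset_leq_card sub; rewrite card_draws card_ord => /leq_trans; apply.
apply: leq_trans (leq_card_setU _ _) _; rewrite leq_add2l.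
elim/big_rec2: _ => [|x A s _ IH]; first by rewrite cards0.
apply: leq_trans (leq_card_setU _ _) _; apply: leq_add IH.
by apply: leq_trans (leq_imset_card _ _) _; rewrite cards_draws.
Qed.

Lemma card_triangles_origin_in_hull : n = (2 * m)%N ->
  ((m + 1) * m * (m - 1) <=
   3 * #|[set S : {set 'I_n} | (#|S| == 3) && `[< origin_in_hull S >]]|)%N.
Proof.
move=> n2m; apply: (pencil_count_arith (e := #|[set x | has_opposite x]|) m_gt0); last first.
  by rewrite -(leq_pmul2l (isT : 0 < 2)%N) -n2m card_has_opposite.
rewrite -n2m; apply: leq_trans card_triangles_le_hull_apex _; rewrite -addnA leq_add2l.
have -> : (n * 'C(m.-1, 2) = \sum_(x : 'I_n) 'C(m.-1, 2))%N.
  by rewrite sum_nat_const card_ord.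
have -> : (#|[set x | has_opposite x]| * m.-1 = \sum_x has_opposite x * m.-1)%N.
  rewrite -big_distrl /= -sum1_card big_mkcond /=; congr (_ * _)%N.
  by apply: eq_bigr => x _; rewrite inE; case: has_opposite.
rewrite -big_split /=; apply: leq_sum => x _.
have := card_ccw_half x; case: has_opposite => /= le_ccw.
  by rewrite mul1n (leq_trans (leq_bin2l _ le_ccw)) // addn1 binS bin1.
by rewrite mul0n addn0 leq_bin2l // -(addn0 m.-1).
Qed.

End PlanarPencil.

Lemma orth_submx (F : fieldType) (d p q : nat) (X : 'M[F]_(p, d)) (Y : 'M[F]_(q, d))
    (z : 'rV[F]_d) :
  X *m Y^T = 0 -> (d <= \rank X + \rank Y)%N -> z *m Y^T = 0 -> (z <= X)%MS.
Proof.
move=> XY rk zY; have sXK : (X <= kermx Y^T)%MS by apply/sub_kermxP.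
have rK : \rank (kermx Y^T) = (d - \rank Y)%N by rewrite mxrank_ker mxrank_tr.
have : (kermx Y^T <= X)%MS.
  have := mxrankS sXK; rewrite -(mxrank_leqif_sup sXK) rK => ?; apply/eqP; lia.
by apply: submx_trans; apply/sub_kermxP.
Qed.

Lemma mul_mx11 (R : pzRingType) (d : nat) (s : 'M[R]_1) (A : 'M[R]_(1, d)) :
  s *m A = s 0 0 *: A.
Proof. by rewrite {1}[s]mx11_scalar mul_scalar_mx. Qed.

Lemma sub_col_mx_coords (F : fieldType) (I : Type) (d : nat) (A : I -> 'rV[F]_d)
    (y z : 'rV[F]_d) :
  (forall i, (A i <= col_mx y z)%MS) ->
  exists al be : I -> F, forall i, A i = al i *: y + be i *: z.
Proof.
move=> sA; pose r i := A i *m pinvmx (col_mx y z).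
exists (fun i => lsubmx (r i) 0 0), (fun i => rsubmx (r i) 0 0) => i.
by rewrite -!mul_mx11 -mul_row_col hsubmxK mulmxKpV.
Qed.

Section Hyperplanes.
Context {R : realType} {d : nat}.
Local Open Scope classical_set_scope.

Definition hform (a : 'rV[R]_d) (b : R) (x : 'rV[R]_d) := (x *m a^T) 0 0 - b.

Lemma hyperplaneE a b x : hyperplane a b x <-> hform a b x = 0.
Proof.
by rewrite /hyperplane /hform; split=> [->|/eqP]; rewrite ?subrr // subr_eq0 => /eqP.
Qed.

Lemma hform_base a b c x : (c *m a^T) 0 0 = b -> hform a b x = ((x - c) *m a^T) 0 0.
Proof. by move=> <-; rewrite /hform mulmxBl !mxE. Qed.

Lemma hform_pencil (a a0 a1 c x : 'rV[R]_d) (b b0 b1 al be : R) :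
  a = al *: a0 + be *: a1 -> (c *m a^T) 0 0 = b -> (c *m a0^T) 0 0 = b0 ->
  (c *m a1^T) 0 0 = b1 -> hform a b x = al * hform a0 b0 x + be * hform a1 b1 x.
Proof.
move=> -> cb cb0 cb1; rewrite (hform_base _ cb) (hform_base _ cb0) (hform_base _ cb1).
by rewrite linearD !linearZ /= mulmxDr -!scalemxAr !mxE.
Qed.

Lemma hform_convex (n : nat) a b (p : 'I_n -> 'rV[R]_d) (w : 'I_n -> R) :
  \sum_j w j = 1 -> hform a b (\sum_j w j *: p j) = \sum_j w j * hform a b (p j).
Proof.
move=> w1; rewrite /hform mulmx_suml summxE.
transitivity (\sum_j w j * (p j *m a^T) 0 0 - (\sum_j w j) * b).
  by rewrite w1 mul1r; congr (_ - _); apply: eq_bigr => j _; rewrite -scalemxAl mxE.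
by rewrite mulr_suml -sumrB; apply: eq_bigr => j _; rewrite mulrBr.
Qed.

Lemma same_component_same_sides (m : nat) (a : 'I_m -> 'rV[R]_d) (b : 'I_m -> R) x y :
  (forall i, 0 < hform (a i) (b i) x * hform (a i) (b i) y) ->
  same_component (~` \bigcup_i hyperplane (a i) (b i)) x y.
Proof.
move=> sides; pose f t := x + t *: (y - x).
have f_cont : continuous f.
  by move=> t; apply: cvgD; [exact: cvg_cst | apply: cvgZr_tmp; exact: cvg_id].
exists (f @` `[0, 1]); last first.
  by exists 1; rewrite /= ?in_itv /= ?lexx ?ler01 // /f scale1r addrC subrK.
split.
- by exists 0; rewrite /= ?in_itv /= ?lexx ?ler01 // /f scale0r addr0.
- move=> _ [t /= t01 <-] [i _ /hyperplaneE]; apply/eqP.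
  have -> : hform (a i) (b i) (f t)
            = (1 - t) * hform (a i) (b i) x + t * hform (a i) (b i) y.
    by rewrite /hform /f mulmxDl -scalemxAl mulmxBl !mxE; ring.
  by apply: convex_comb_neq0; rewrite -?in_itv.
- apply: connected_continuous_connected; first exact: segment_connected.
  exact: continuous_subspaceT.
Qed.

Lemma flat_sub_hyperplane k (B : 'M[R]_(k, d)) c a b :
  [set x | exists u : 'rV_k, x = c + u *m B] `<=` hyperplane a b ->
  (c *m a^T) 0 0 = b /\ a *m B^T = 0.
Proof.
move=> sub; have cb : (c *m a^T) 0 0 = b by apply: sub; exists 0; rewrite mul0mx addr0.
split=> //; apply/rowP => j; rewrite [RHS]mxE.
have /sub : exists u : 'rV_k, c + row j B = c + u *m B by exists (delta_mx 0 j); rewrite -rowE.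
rewrite /hyperplane /= mulmxDl mxE cb -[RHS]addr0 => /addrI <-.
by rewrite !mxE; apply: eq_bigr => l _; rewrite !mxE mulrC.
Qed.

Lemma rank_col_mx_hyperplanes (a0 a1 c : 'rV[R]_d) (b0 b1 : R) :
  a0 != 0 -> a1 != 0 -> (c *m a0^T) 0 0 = b0 -> (c *m a1^T) 0 0 = b1 ->
  hyperplane a0 b0 <> hyperplane a1 b1 -> (2 <= \rank (col_mx a0 a1))%N.
Proof.
move=> a0_neq0 a1_neq0 cb0 cb1 neq; have indep : ~~ (a1 <= a0)%MS.
  apply/negP => /submxP[r]; rewrite mul_mx11; set s := r 0 0 => a1E.
  have s_neq0 : s != 0 by apply: contra_neq a1_neq0; rewrite a1E => ->; rewrite scale0r.
  have hf x : hform a1 b1 x = s * hform a0 b0 x.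
    by rewrite (hform_base _ cb1) (hform_base _ cb0) a1E linearZ /= -scalemxAr mxE.
  apply: neq; apply/seteqP; split=> x /hyperplaneE hx; apply/hyperplaneE.
    by rewrite hf hx mulr0.
  by move/eqP: hx; rewrite hf mulf_eq0 (negbTE s_neq0) => /eqP.
have lt : (a0 < a0 + a1)%MS by rewrite ltmxE addsmxSl /= addsmx_sub submx_refl.
by have := rank_ltmx lt; rewrite rank_rV a0_neq0 /= addsmxE.
Qed.

Lemma flat_of_hform0 k (B : 'M[R]_(k, d)) c (a0 a1 : 'rV[R]_d) (b0 b1 : R) x :
  a0 *m B^T = 0 -> a1 *m B^T = 0 -> (d <= \rank B + \rank (col_mx a0 a1))%N ->
  (c *m a0^T) 0 0 = b0 -> (c *m a1^T) 0 0 = b1 ->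
  hform a0 b0 x = 0 -> hform a1 b1 x = 0 -> exists u : 'rV_k, x = c + u *m B.
Proof.
move=> a0B a1B rk cb0 cb1 hx0 hx1.
have BM : B *m (col_mx a0 a1)^T = 0.
  by rewrite -[LHS]trmxK trmx_mul trmxK mul_col_mx a0B a1B col_mx0 trmx0.
have xcM : (x - c) *m (col_mx a0 a1)^T = 0.
  rewrite tr_col_mx mul_mx_row [_ *m a0^T]mx11_scalar [_ *m a1^T]mx11_scalar.
  by rewrite -(hform_base _ cb0) -(hform_base _ cb1) hx0 hx1 raddf0 row_mx0.
have /submxP[u xcE] := orth_submx BM rk xcM.
by exists u; rewrite -xcE addrC subrK.
Qed.

End Hyperplanes.

Section PencilOfHyperplanes.
Local Open Scope classical_set_scope.
Context {R : realType} {d m q : nat} (a : 'I_m -> 'rV[R]_d) (b : 'I_m -> R)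
  (c : 'rV[R]_d) (B : 'M[R]_(q, d)) (p : 'I_(2 * m) -> 'rV[R]_d).
Let L := [set x | exists u : 'rV_q, x = c + u *m B].
Let H := \bigcup_i hyperplane (a i) (b i).
Hypothesis a_neq0 : forall i, a i != 0.
Hypothesis hyperplane_inj :
  forall i j, i != j -> hyperplane (a i) (b i) <> hyperplane (a j) (b j).
Hypothesis rank_B : (d <= \rank B + 2)%N.
Hypothesis flat_sub : forall i, L `<=` hyperplane (a i) (b i).
Hypothesis p_off : forall k, ~ H (p k).
Hypothesis p_sep : forall k l, k != l -> ~ same_component (~` H) (p k) (p l).
Hypothesis m_gt1 : (1 < m)%N.

Let i0 : 'I_m := Ordinal (ltnW m_gt1).
Let i1 : 'I_m := Ordinal m_gt1.
Let u k := hform (a i0) (b i0) (p k).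
Let v k := hform (a i1) (b i1) (p k).

Lemma base_on_hyperplanes i : (c *m (a i)^T) 0 0 = b i.
Proof. exact: (flat_sub_hyperplane (flat_sub i)).1. Qed.

Lemma normals_orth_flat i : a i *m B^T = 0.
Proof. exact: (flat_sub_hyperplane (flat_sub i)).2. Qed.

Lemma rank_flat_pencil : (d <= \rank B + \rank (col_mx (a i0) (a i1)))%N.
Proof.
apply: leq_trans rank_B _; rewrite leq_add2l.
apply: (rank_col_mx_hyperplanes (c := c)); rewrite ?base_on_hyperplanes //.
by apply: hyperplane_inj; apply/eqP => /(congr1 val).
Qed.

Lemma pencil_coords :
  exists al be : 'I_m -> R, forall i, a i = al i *: a i0 + be i *: a i1.
Proof.
apply: sub_col_mx_coords => i; apply: orth_submx (normals_orth_flat i).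
  by rewrite mul_col_mx !normals_orth_flat col_mx0.
by rewrite addnC rank_flat_pencil.
Qed.

Lemma hform_points_neq0 i k : hform (a i) (b i) (p k) != 0.
Proof. by apply/eqP => /hyperplaneE hk; apply: (@p_off k); exists i. Qed.

Lemma hform_points_sign_inj k l :
  (forall i, (0 < hform (a i) (b i) (p k)) = (0 < hform (a i) (b i) (p l))) -> k = l.
Proof.
move=> sgn; apply/eqP; apply: contraT => kl; case: (p_sep kl).
by apply: same_component_same_sides => i; rewrite mulr_gt0_same_sign ?hform_points_neq0.
Qed.

Lemma origin_in_hull_meets_flat (S : {set 'I_(2 * m)}) :
  origin_in_hull u v S -> exists x, L x /\ conv_hull p S x.
Proof.
case=> w [w_ge0 wS w1 wu wv]; exists (\sum_j w j *: p j); split; last by exists w.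
apply: (flat_of_hform0 (normals_orth_flat i0) (normals_orth_flat i1) rank_flat_pencil
          (base_on_hyperplanes i0) (base_on_hyperplanes i1)); by rewrite hform_convex.
Qed.

Lemma pencil_triangles_meeting_flat :
  ((m + 1) * m * (m - 1) <= 3 * num_triangles_meeting p L)%N.
Proof.
have [al [be aE]] := pencil_coords.
have lformE i k : lform u v al be i k = hform (a i) (b i) (p k).
  by rewrite (hform_pencil _ (aE i) (base_on_hyperplanes i) (base_on_hyperplanes i0)
                                    (base_on_hyperplanes i1)).
have lform_neq0 i k : lform u v al be i k != 0 by rewrite lformE hform_points_neq0.
have lform_sign_inj k l :
    (forall i, (0 < lform u v al be i k) = (0 < lform u v al be i l)) -> k = l.
  by move=> sgn; apply: hform_points_sign_inj => i; rewrite -!lformE.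
have := card_triangles_origin_in_hull lform_neq0 lform_sign_inj (ltnW m_gt1) erefl.
move/leq_trans; apply.
rewrite leq_mul2l /=; apply: subset_leq_card; apply/fintype.subsetP => S.
rewrite !inE => /andP[S3 /asboolP/origin_in_hull_meets_flat meets].
by rewrite /= S3; apply/asboolP.
Qed.

End PencilOfHyperplanes.

Local Open Scope classical_set_scope.

Theorem corollary17 (R : realType) (d m : nat) (hd : (2 <= d)%N) (hm : (1 <= m)%N)
  (a : 'I_m -> 'rV[R]_d) (b : 'I_m -> R) (L : set 'rV[R]_d)
  (p : 'I_(2 * m) -> 'rV[R]_d) :
  (forall i, a i != 0) ->
  (forall i j, i != j -> hyperplane (a i) (b i) <> hyperplane (a j) (b j)) ->
  is_flat (d - 2) L ->
  (forall i, L `<=` hyperplane (a i) (b i)) ->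
  (* each p k lies in a part, i.e. in the complement of the union *)
  (forall k, ~ (\bigcup_i hyperplane (a i) (b i)) (p k)) ->
  (* distinct points lie in distinct parts (connected components) *)
  (forall k l, k != l ->
     ~ same_component (~` \bigcup_i hyperplane (a i) (b i)) (p k) (p l)) ->
  ((m + 1) * m * (m - 1))%:R / 3 <= (num_triangles_meeting p L)%:R :> R.
Proof.
move=> a_neq0 hyp_inj [c [B [B_free ->]]] flat_sub p_off p_sep.
rewrite ler_pdivrMr // -natrM ler_nat [X in (_ <= X)%N]mulnC.
have [m_gt1|m_le1] := ltnP 1 m; last by rewrite (_ : m - 1 = 0)%N ?muln0 //; lia.
apply: (pencil_triangles_meeting_flat a_neq0 hyp_inj _ flat_sub p_off p_sep m_gt1).
by move: B_free; rewrite -row_leq_rank; lia.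
Qed.
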